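(* Let $q$ be a prime power, $r\ge 1$ an integer, and $\mathcal{S}$ a $q^r$-divisible spanning set of $q^{r+1}$ points in $\mathrm{PG}(v-1,q)$. Then the number of hyperplanes $H$ with $|\mathcal{S}\cap H|=q^r$ is at least $\frac{q^v-1}{q-1}-\left(q^{v-r-1}-q+1\right)$.
   Context: $\mathrm{PG}(v-1,q)$ is the projective space of $\mathbb{F}_q^v$; points are $1$-dimensional and hyperplanes $(v-1)$-dimensional subspaces of $\mathbb{F}_q^v$. A set $\mathcal{S}$ of points is spanning if its points span $\mathbb{F}_q^v$, and it is $q^r$-divisible if $|\mathcal{S}\cap H|\equiv|\mathcal{S}|\pmod{q^r}$ for every hyperplane $H$. *)

From mathcomp Require Import all_boot all_order all_algebra.
Set Implicit Arguments. Unset Strict Implicit. Unset Printing Implicit Defensive.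
Import GRing.Theory Num.Theory.

(* Subspaces of F^v are represented (as in mxalgebra) by square matrices
   'M[F]_v in canonical form <<A>>%MS = A, so that distinct subspaces are
   distinct matrices.  The subspace is the row space of the matrix. *)

Section PG.
Variables (F : finFieldType) (v : nat).

Definition is_point (P : 'M[F]_v) : bool :=
  (\rank P == 1%N) && (<<P>>%MS == P).

Definition is_hyperplane (H : 'M[F]_v) : bool :=
  (\rank H == v.-1) && (<<H>>%MS == H).

Definition pts_in (S : {set 'M[F]_v}) (H : 'M[F]_v) : {set 'M[F]_v} :=
  [set P in S | (P <= H)%MS].

Definition spanning (S : {set 'M[F]_v}) : Prop :=
  \rank (\sum_(P in S) P)%MS = v.

Definition divisible (S : {set 'M[F]_v}) (m : nat) : Prop :=
  forall H : 'M[F]_v, is_hyperplane H -> #|pts_in S H| = #|S| %[mod m].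

Definition num_hyp (S : {set 'M[F]_v}) (k : nat) : nat :=
  #|[set H : 'M[F]_v | is_hyperplane H && (#|pts_in S H| == k)]|.
End PG.

From mathcomp Require Import all_boot all_order all_algebra.
Import Order.TTheory GRing.Theory Num.Theory.
From mathcomp Require Import ring lra.
Set Implicit Arguments. Unset Strict Implicit. Unset Printing Implicit Defensive.
Local Open Scope ring_scope.

(* Proof idea (the standard-equations / variance method).
   Every hyperplane of PG(v-1,q) is the kernel of a nonzero column vector c,
   and exactly q-1 such vectors give the same hyperplane.  Summing over the
   nonzero vectors c instead of over hyperplanes turns the moments
     A_e = \sum_H |S ∩ H|^e   (e = 0, 1, 2)
   into counts of vectors annihilating one or two points of S, which are
   powers of q.  This yields the "standard equations" for A_1 and A_2.
   Divisibility makes every |S ∩ H| a multiple of m = q^r (since |S| = q m),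
   and for a multiple k of m one has m^2 [k <> m] <= (k - m)^2; summing gives
     m^2 (A_0 - a) <= \sum_H (|S ∩ H| - m)^2,  a = #{H : |S ∩ H| = m},
   in which A_0 cancels:  2 m A_1 - A_2 <= m^2 a. *)

Lemma card_set_sum (T : finType) (p b : pred T) :
  #|[set x | p x && b x]|%:R = \sum_(x | p x) (b x)%:R :> rat.
Proof.
rewrite (eq_bigr (fun x => if b x then 1 else 0)); last by move=> x _; case: (b x).
by rewrite -big_mkcondr sumr_const; congr (_%:R); apply: eq_card => x; rewrite inE.
Qed.

(* A multiple k of m is either m or at distance at least m from m. *)
Lemma multiple_sqr_bound (R : realDomainType) (m k : nat) : (0 < m)%N -> (m %| k)%N ->
  m%:R ^+ 2 * (k != m)%:R <= (k%:R - m%:R) ^+ 2 :> R.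
Proof.
move=> m0 /dvdnP[j ->]; have [-> | ne] := eqVneq (j * m)%N m.
  by rewrite mulr0 sqr_ge0.
rewrite mulr1; case: j ne => [|[|j]] ne.
- by rewrite mul0n sub0r sqrrN.
- by rewrite mul1n eqxx in ne.
have hJ : (2 : R) <= j.+2%:R by rewrite ler_nat.
have hM : (0 : R) <= m%:R by rewrite ler0n.
rewrite natrM; set J : R := j.+2%:R in hJ *; set M : R := m%:R in hM *.
have : 0 <= M ^+ 2 * ((J - 2) * J) by apply: mulr_ge0; [exact: sqr_ge0 | nra].
nra.
Qed.

Lemma multiples_variance_bound (R : realDomainType) (I : finType) (p : pred I)
    (k : I -> nat) (m : nat) :
  (0 < m)%N -> (forall i, p i -> (m %| k i)%N) ->
  m%:R ^+ 2 * \sum_(i | p i) (k i != m)%:R <= \sum_(i | p i) ((k i)%:R - m%:R) ^+ 2 :> R.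
Proof.
move=> m0 dvd; rewrite mulr_sumr; apply: ler_sum => i pi.
exact: multiple_sqr_bound (dvd i pi).
Qed.

Section Hyperplanes.
Variables (F : finFieldType) (v : nat).
Local Notation q := #|F|.

Lemma card_field_gt1 : (1 < q)%N.
Proof. by apply/card_gt1P; exists 0, 1; split => //; rewrite eq_sym oner_neq0. Qed.

Lemma card_rowspace k (K : 'M[F]_(k, v)) :
  #|[set u : 'rV[F]_v | (u <= K)%MS]| = (q ^ \rank K)%N.
Proof.
have -> : [set u : 'rV[F]_v | (u <= K)%MS] =
          [set D *m row_base K | D : 'rV[F]_(\rank K)].
  apply/setP=> u; rewrite inE -(eq_row_base K); apply/submxP/imsetP.
    by case=> D ->; exists D.
  by case=> D _ ->; exists D.
rewrite card_imset; last exact: row_free_inj (row_base_free K).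
by rewrite card_mx mul1n.
Qed.

Lemma card_kernel k (A : 'M[F]_(k, v)) :
  #|[set c : 'cV[F]_v | A *m c == 0]| = (q ^ (v - \rank A))%N.
Proof.
rewrite -mxrank_tr -mxrank_ker -card_rowspace.
rewrite -(card_imset _ (@trmx_inj _ _ _)); apply: eq_card => u; rewrite inE.
apply/imsetP/idP.
  by case=> c; rewrite inE => /eqP Ac ->; rewrite sub_kermx -trmx_mul Ac trmx0.
rewrite sub_kermx => /eqP Au; exists u^T; last by rewrite trmxK.
by rewrite inE -(inj_eq (@trmx_inj _ _ _)) trmx_mul trmxK Au trmx0.
Qed.

Lemma count_annihilators k (A : 'M[F]_(k, v)) :
  \sum_(c : 'cV[F]_v | c != 0) (A *m c == 0)%:R = (q ^ (v - \rank A))%:R - 1 :> rat.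
Proof.
rewrite -card_set_sum -card_kernel (cardsD1 0 [set c | A *m c == 0]).
rewrite inE mulmx0 eqxx natrD [_%:R + _]addrC addrK; congr (_%:R).
by apply: eq_card => c; rewrite !inE.
Qed.

Definition normal_hyperplane (c : 'cV[F]_v) : 'M[F]_v := <<kermx c>>%MS.

Lemma sub_normal_hyperplane k (P : 'M[F]_(k, v)) c :
  (P <= normal_hyperplane c)%MS = (P *m c == 0).
Proof. by rewrite genmxE sub_kermx. Qed.

Lemma rank_nonzero_cV (c : 'cV[F]_v) : c != 0 -> \rank c = 1%N.
Proof. by move=> nz; apply/eqP; rewrite eqn_leq rank_leq_col lt0n mxrank_eq0 nz. Qed.

Lemma normal_hyperplaneP c : c != 0 -> is_hyperplane (normal_hyperplane c).
Proof.
move=> nz; rewrite /is_hyperplane genmx_id eqxx andbT genmxE mxrank_ker.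
by rewrite rank_nonzero_cV // subn1.
Qed.

Lemma hyperplane_of_normal H c :
  is_hyperplane H -> c != 0 -> H *m c == 0 -> H = normal_hyperplane c.
Proof.
case/andP=> /eqP rH /eqP gH nz Hc.
have sH : (H <= kermx c)%MS by rewrite sub_kermx.
have := (mxrank_leqif_eq sH).2.
rewrite mxrank_ker rank_nonzero_cV // subn1 rH eqxx => /esym/genmxP.
by rewrite gH.
Qed.

Lemma card_normals H : (0 < v)%N -> is_hyperplane H ->
  #|[set c : 'cV[F]_v | (c != 0) && (normal_hyperplane c == H)]| = (q - 1)%N.
Proof.
move=> v0 hH.
have -> : [set c : 'cV[F]_v | (c != 0) && (normal_hyperplane c == H)] =
          [set c : 'cV[F]_v | H *m c == 0] :\ 0.
  apply/setP=> c; rewrite !inE andbC; have [-> | nz] := eqVneq c 0; rewrite ?andbF //.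
  rewrite andbT; apply/eqP/idP=> [<- | Hc]; first by rewrite -sub_normal_hyperplane submx_refl.
  by rewrite -(hyperplane_of_normal hH nz Hc).
have := cardsD1 0 [set c : 'cV[F]_v | H *m c == 0].
rewrite inE mulmx0 eqxx card_kernel; case/andP: hH => /eqP -> _.
by rewrite -subn1 subKn // expn1 add1n => ->; rewrite subn1.
Qed.

Lemma sum_over_normals (f : 'M[F]_v -> rat) : (0 < v)%N ->
  \sum_(c : 'cV[F]_v | c != 0) f (normal_hyperplane c) =
  (q - 1)%:R * \sum_(H | is_hyperplane H) f H.
Proof.
move=> v0; rewrite (partition_big normal_hyperplane (fun H => is_hyperplane H)); last first.
  by move=> c; apply: normal_hyperplaneP.
rewrite big_distrr /=; apply: eq_bigr => H hH.
rewrite (eq_bigr (fun _ => f H)); last by move=> c /andP[_ /eqP ->].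
by rewrite sumr_const -(card_normals v0 hH) mulr_natl cardsE.
Qed.

Lemma rank_two_points (P P' : 'M[F]_v) : is_point P -> is_point P' -> P != P' ->
  \rank (col_mx P P') = 2%N.
Proof.
case/andP=> /eqP rP /eqP gP; case/andP=> /eqP rP' /eqP gP' neq.
rewrite -(addsmxE P P').1; apply/eqP; rewrite eqn_leq.
have -> : (\rank (P + P') <= 2)%N by have := (mxrank_adds_leqif P P').1; rewrite rP rP'.
rewrite ltnNge; apply: contra neq => le1.
have eq_sum (X : 'M[F]_v) : \rank X = 1%N -> (X <= P + P')%MS -> (X == P + P')%MS.
  move=> rX sX; rewrite -(mxrank_leqif_eq sX).2 eqn_leq rX le1.
  by rewrite -rX mxrankS.
have /genmxP e1 := eq_sum P rP (addsmxSl P P').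
have /genmxP e2 := eq_sum P' rP' (addsmxSr P P').
by rewrite -gP -gP' e1 e2.
Qed.

Lemma points_dim (S : {set 'M[F]_v}) :
  (forall P, P \in S -> is_point P) -> (1 < #|S|)%N -> (2 <= v)%N.
Proof.
move=> pts /card_gt1P[P [P' [PS P'S ne]]].
by rewrite -(rank_two_points (pts P PS) (pts P' P'S) ne) rank_leq_col.
Qed.

Definition hyp_moment (S : {set 'M[F]_v}) (e : nat) : rat :=
  \sum_(H | is_hyperplane H) #|pts_in S H|%:R ^+ e.

Lemma card_pts_normal (S : {set 'M[F]_v}) c :
  #|pts_in S (normal_hyperplane c)|%:R = \sum_(P in S) (P *m c == 0)%:R :> rat.
Proof.
rewrite card_set_sum; apply: eq_bigr => P _; by rewrite sub_normal_hyperplane.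
Qed.

Section StandardEquations.
Variable S : {set 'M[F]_v}.
Hypothesis pts : forall P, P \in S -> is_point P.
Hypothesis v_gt0 : (0 < v)%N.

Lemma standard_eq1 :
  (q - 1)%:R * hyp_moment S 1 = #|S|%:R * ((q ^ v.-1)%:R - 1).
Proof.
rewrite -(sum_over_normals (fun H => #|pts_in S H|%:R ^+ 1)) //.
under eq_bigr do rewrite expr1 card_pts_normal.
rewrite exchange_big (eq_bigr (fun _ => (q ^ v.-1)%:R - 1)) ?sumr_const ?mulr_natl //.
move=> P PS; rewrite count_annihilators; case/andP: (pts PS) => /eqP -> _.
by rewrite subn1.
Qed.

Lemma count_common_annihilators P P' : P \in S -> P' \in S -> P' != P ->
  \sum_(c : 'cV[F]_v | c != 0) (P *m c == 0)%:R * (P' *m c == 0)%:R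
    = (q ^ v.-2)%:R - 1 :> rat.
Proof.
move=> PS P'S ne.
rewrite -subn2 -(rank_two_points (pts PS) (pts P'S)) 1?eq_sym //.
rewrite -count_annihilators; apply: eq_bigr => c _.
by rewrite mul_col_mx col_mx_eq0 -mulnb natrM.
Qed.

Lemma incidences_through P : P \in S ->
  \sum_(P' in S) \sum_(c : 'cV[F]_v | c != 0) (P *m c == 0)%:R * (P' *m c == 0)%:R
    = ((q ^ v.-1)%:R - 1) + (#|S| - 1)%:R * ((q ^ v.-2)%:R - 1) :> rat.
Proof.
move=> PS; rewrite (bigD1 P) //=; congr (_ + _).
  under eq_bigr do rewrite -natrM mulnb andbb.
  by rewrite count_annihilators; case/andP: (pts PS) => /eqP -> _; rewrite subn1.
rewrite (eq_bigr (fun _ => (q ^ v.-2)%:R - 1)); last first.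
  by move=> P' /andP[P'S ne]; rewrite count_common_annihilators.
rewrite sumr_const mulr_natl (cardsD1 P S) PS add1n subn1; congr (_ *+ _).
by apply: eq_card => x; rewrite !inE andbC.
Qed.

Lemma standard_eq2 : (q - 1)%:R * hyp_moment S 2 =
  #|S|%:R * (((q ^ v.-1)%:R - 1) + (#|S| - 1)%:R * ((q ^ v.-2)%:R - 1)).
Proof.
rewrite -(sum_over_normals (fun H => #|pts_in S H|%:R ^+ 2)) //.
under eq_bigr do rewrite card_pts_normal expr2 mulr_suml.
under eq_bigr do under eq_bigr do rewrite mulr_sumr.
rewrite exchange_big; under eq_bigr do rewrite exchange_big.
rewrite (eq_bigr _ incidences_through) sumr_const; exact: esym (mulr_natl _ _).
Qed.

End StandardEquations.

Lemma hyperplane_variance (S : {set 'M[F]_v}) (m : nat) : (0 < m)%N ->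
  (forall H, is_hyperplane H -> (m %| #|pts_in S H|)%N) ->
  2 * m%:R * hyp_moment S 1 - hyp_moment S 2 <= m%:R ^+ 2 * (num_hyp S m)%:R.
Proof.
move=> m0 dvd; have := @multiples_variance_bound rat _ _ _ _ m0 dvd.
have -> : \sum_(H | is_hyperplane H) (#|pts_in S H| != m)%:R =
          hyp_moment S 0 - (num_hyp S m)%:R :> rat.
  rewrite /num_hyp card_set_sum /hyp_moment -sumrB; apply: eq_bigr => H _.
  by rewrite expr0; case: (_ == m).
have -> : \sum_(H | is_hyperplane H) (#|pts_in S H|%:R - m%:R) ^+ 2 =
    hyp_moment S 2 - 2 * m%:R * hyp_moment S 1 + m%:R ^+ 2 * hyp_moment S 0 :> rat.
  rewrite /hyp_moment !mulr_sumr -sumrB -big_split /=; apply: eq_bigr => H _.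
  by rewrite expr1 expr0 mulr1; ring.
lra.
Qed.

End Hyperplanes.

Lemma moment_bound (R : realFieldType) (v : nat) (Q M y A1 A2 a : R) :
  (2 <= v)%N -> 1 < Q -> 0 < M -> M * y = Q ^+ v.-1 ->
  (Q - 1) * A1 = Q * M * (Q ^+ v.-1 - 1) ->
  (Q - 1) * A2 = Q * M * ((Q ^+ v.-1 - 1) + (Q * M - 1) * (Q ^+ v.-2 - 1)) ->
  2 * M * A1 - A2 <= M ^+ 2 * a ->
  (Q ^+ v - 1) / (Q - 1) - (y - Q + 1) <= a.
Proof.
case: v => [|[|w]] // _ Q1 M0 /=; set X := Q ^+ w => My E1 E2 var.
have Q10 : 0 < Q - 1 by rewrite subr_gt0.
have D0 : 0 < (Q - 1) * M ^+ 2 by rewrite mulr_gt0 ?exprn_gt0.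
rewrite -(ler_pM2l D0).
have -> : (Q - 1) * M ^+ 2 * ((Q ^+ w.+2 - 1) / (Q - 1) - (y - Q + 1)) =
    M ^+ 2 * (Q ^+ w.+2 - 1) - (Q - 1) * M * (M * y) + (Q - 1) ^+ 2 * M ^+ 2.
  by field; rewrite lt0r_neq0.
have key : (Q - 1) * (2 * M * A1 - A2) <= (Q - 1) * M ^+ 2 * a.
  by rewrite -[_ * M ^+ 2 * a]mulrA; apply: ler_wpM2l; first exact: ltW.
apply: le_trans key.
have -> : (Q - 1) * (2 * M * A1 - A2) = 2 * M * ((Q - 1) * A1) - (Q - 1) * A2 by ring.
rewrite My E1 E2 !exprS -/X; lra.
Qed.

Lemma expfz_split (R : fieldType) (Q : R) (v r : nat) : Q != 0 -> (0 < v)%N ->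
  Q ^+ r * Q ^ (v%:Z - r%:Z - 1) = Q ^+ v.-1.
Proof.
move=> Q0 v0; rewrite -[Q ^+ r]/(Q ^ r%:Z) -expfzDr //.
by rewrite -[Q ^+ v.-1]/(Q ^ v.-1%:Z); congr (_ ^ _); rewrite -(prednK v0) /=; ring.
Qed.

Theorem mainTheorem2 (F : finFieldType) (v r : nat) (S : {set 'M[F]_v}) :
  (0 < r)%N ->
  (forall P, P \in S -> is_point P) ->
  spanning S ->
  divisible S (#|F| ^ r)%N ->
  #|S| = (#|F| ^ r.+1)%N ->
  (num_hyp S (#|F| ^ r)%N)%:R >=
    ((#|F|%:R ^+ v - 1) / (#|F|%:R - 1)
     - (#|F|%:R ^ (v%:Z - r%:Z - 1) - #|F|%:R + 1) : rat).
Proof.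
move=> _ pts _ div cS; set q := #|F|.
have q1 : (1 < q)%N := card_field_gt1 F.
have v2 : (2 <= v)%N.
  by apply: (points_dim pts); rewrite cS expnS (leq_trans q1) // leq_pmulr // expn_gt0 ltnW.
(* every intersection number is a multiple of q^r, since |S| = q * q^r *)
have dvd H : is_hyperplane H -> (q ^ r %| #|pts_in S H|)%N.
  by move/div; rewrite cS expnS modnMl => /eqP.
have qB : (q - 1)%:R = q%:R - 1 :> rat by rewrite natrB // ltnW.
have nS : #|S|%:R = q%:R * q%:R ^+ r :> rat by rewrite cS expnS natrM natrX.
have nS1 : (#|S| - 1)%:R = q%:R * q%:R ^+ r - 1 :> rat.
  by rewrite natrB -?nS // cS expn_gt0 ltnW.
apply: (moment_bound (M := q%:R ^+ r) (A1 := hyp_moment S 1) (A2 := hyp_moment S 2) v2).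
- by rewrite ltr1n.
- by rewrite exprn_gt0 // ltr0n ltnW.
- by rewrite expfz_split ?pnatr_eq0 -?lt0n // ltnW.
- by rewrite -qB -nS -natrX standard_eq1 // ltnW.
- by rewrite -qB -nS1 -nS -!natrX standard_eq2 // ltnW.
- by rewrite -natrX hyperplane_variance // expn_gt0 ltnW.
Qed.
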